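(* Let $\Bbbk$ be an algebraically closed field of characteristic $2$, let $\mathfrak{u}(\mathfrak{m})$ be the algebra generated by $a,b,c$ with relations $ab+ba=c$, $ac+ca=a$, $bc+cb=b$, $a^4=b^4=0$, $c^2+c=0$, let $e_0=(1+ab+a^2b^2)(1+c)$, $e_1=(1+a^2b^2)c$, $e=e_0+e_1$ and $\mathfrak{u}(\mathfrak{m})^{\mathtt b}=e\,\mathfrak{u}(\mathfrak{m})\,e$. Let $Q$ be the quiver with vertices $0,1$, two arrows $\alpha_1,\alpha_2$ from $0$ to $1$ and two arrows $\beta_1,\beta_2$ from $1$ to $0$. Then: (i) there is a surjective algebra map $\varphi:\Bbbk Q\to\mathfrak{u}(\mathfrak{m})^{\mathtt b}$ with $\varphi(\varepsilon_i)=e_i$ ($i=0,1$), $\varphi(\alpha_1)=a^3e_1$, $\varphi(\alpha_2)=be_1$, $\varphi(\beta_1)=ae_0$, $\varphi(\beta_2)=b^3e_0$, whose kernel is the ideal $$I=\langle \alpha_1\beta_1,\ \alpha_2\beta_2,\ \beta_1\alpha_1,\ \beta_2\alpha_2,\ \alpha_1\beta_2+\alpha_2\beta_1,\ \beta_1\alpha_2+\beta_2\alpha_1\rangle,$$ so that $\mathfrak{u}(\mathfrak{m})^{\mathtt b}\simeq\Bbbk Q/I$; (ii) the algebra $\mathfrak{u}(\mathfrak{m})^{\mathtt b}$ is special biserial.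
   Context: $\Bbbk Q$ is the path algebra of $Q$, $\varepsilon_i$ the trivial path at vertex $i$, and the product of paths is concatenation with $pq$ meaning ''first $p$, then $q$'' (so $\varepsilon_{s(\alpha)}\alpha=\alpha=\alpha\varepsilon_{t(\alpha)}$). For a bound quiver $(Q,I)$ with $I$ admissible, $\Bbbk Q/I$ is special biserial if every vertex is the source of at most two arrows and the target of at most two arrows, and for arrows $\alpha\neq\beta$ and $\gamma$: if $s(\alpha)=s(\beta)=t(\gamma)$ then $\gamma\alpha\in I$ or $\gamma\beta\in I$; if $t(\alpha)=t(\beta)=s(\gamma)$ then $\alpha\gamma\in I$ or $\beta\gamma\in I$. *)

From HB Require Import structures.
From mathcomp Require Import all_boot all_order all_algebra.
From mathcomp.multinomials Require Import monalg.
Set Implicit Arguments.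
Unset Strict Implicit.
Unset Printing Implicit Defensive.
Import GRing.Theory.
Local Open Scope ring_scope.

Definition ideal_gen (R : nzRingType) (S : R -> Prop) (x : R) : Prop :=
  exists l : seq (R * R * R),
    (forall t, t \in l -> S t.1.2) /\ x = \sum_(t <- l) t.1.1 * t.1.2 * t.2.

(* The algebra u(m): the free (noncommutative) k-algebra k<a,b,c>      *)
(* (monoid algebra of the free monoid on 'I_3), taken modulo the       *)
(* two-sided ideal generated by the defining relations.  Elements of    *)
(* u(m) are represented by elements of the free algebra, and equality  *)
(* in u(m) is congruence modulo that ideal ([um_eq]).                   *)
Section Um.
Variable k : fieldType.

Definition freealg := {malg k[{fmonom 'I_3}]}.

Definition gen (i : 'I_3) : freealg := << fmu i >>.
Definition ga : freealg := gen (@Ordinal 3 0 isT).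
Definition gb : freealg := gen (@Ordinal 3 1 isT).
Definition gc : freealg := gen (@Ordinal 3 2 isT).

Definition um_rel (x : freealg) : Prop :=
  x = ga * gb + gb * ga - gc \/
  x = ga * gc + gc * ga - ga \/
  x = gb * gc + gc * gb - gb \/
  x = ga ^+ 4 \/
  x = gb ^+ 4 \/
  x = gc ^+ 2 + gc.

Definition um_eq (x y : freealg) : Prop := ideal_gen um_rel (x - y).

Definition ue0 : freealg := (1 + ga * gb + ga ^+ 2 * gb ^+ 2) * (1 + gc).
Definition ue1 : freealg := (1 + ga ^+ 2 * gb ^+ 2) * gc.
Definition ue : freealg := ue0 + ue1.
End Um.

Definition v0 : 'I_2 := @Ordinal 2 0 isT.
Definition v1 : 'I_2 := @Ordinal 2 1 isT.
Definition src (x : 'I_4) : 'I_2 := if (x < 2)%N then v0 else v1.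
Definition tgt (x : 'I_4) : 'I_2 := if (x < 2)%N then v1 else v0.
Definition alpha1 : 'I_4 := @Ordinal 4 0 isT.
Definition alpha2 : 'I_4 := @Ordinal 4 1 isT.
Definition beta1 : 'I_4 := @Ordinal 4 2 isT.
Definition beta2 : 'I_4 := @Ordinal 4 3 isT.

(* A path is a pair (v, s): the starting vertex v and the sequence s    *)
(* of arrows, in order of traversal; (v, [::]) is the trivial path e_v. *)
Definition qpath := ('I_2 * seq 'I_4)%type.
Definition valid_path (p : qpath) : bool :=
  match p.2 with
  | [::] => true
  | x :: s => (src x == p.1) && path (fun y z => tgt y == src z) x s
  end.
Definition path_end (p : qpath) : 'I_2 :=
  match p.2 with
  | [::] => p.1
  | x :: s => tgt (last x s)
  end.

(* P is (a copy of) the path algebra kQ, with pe p the basis element   *)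
(* attached to the path p: the paths form a k-basis of P and the       *)
(* product of two paths is their concatenation ("first p then q") if   *)
(* the end of p is the start of q, and 0 otherwise.                    *)
Definition is_path_algebra (k : fieldType) (P : algType k) (pe : qpath -> P)
  : Prop :=
  [/\ (forall p q, valid_path p -> valid_path q ->
         pe p * pe q = if path_end p == q.1 then pe (p.1, p.2 ++ q.2) else 0),
      (forall y : P, exists l : seq (k * qpath),
         (forall t, t \in l -> valid_path t.2) /\
         y = \sum_(t <- l) t.1 *: pe t.2) &
      (forall l : seq (k * qpath),
         uniq (map snd l) -> (forall t, t \in l -> valid_path t.2) ->
         \sum_(t <- l) t.1 *: pe t.2 = 0 -> forall t, t \in l -> t.1 = 0)].

Section PathAlg.
Variables (k : fieldType) (P : algType k) (pe : qpath -> P).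
Definition eps (v : 'I_2) : P := pe (v, [::]).
Definition arr (x : 'I_4) : P := pe (src x, [:: x]).

Definition I_rel (x : P) : Prop :=
  x = arr alpha1 * arr beta1 \/
  x = arr alpha2 * arr beta2 \/
  x = arr beta1 * arr alpha1 \/
  x = arr beta2 * arr alpha2 \/
  x = arr alpha1 * arr beta2 + arr alpha2 * arr beta1 \/
  x = arr beta1 * arr alpha2 + arr beta2 * arr alpha1.
Definition I_Q (x : P) : Prop := ideal_gen I_rel x.

Definition arrow_ideal_pow (m : nat) (x : P) : Prop :=
  ideal_gen (fun y => exists s : seq 'I_4, size s = m /\ y = \prod_(i <- s) arr i) x.

Definition admissible (I : P -> Prop) : Prop :=
  exists m, (2 <= m)%N /\ (forall x, arrow_ideal_pow m x -> I x) /\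
            (forall x, I x -> arrow_ideal_pow 2 x).

Definition special_biserial (I : P -> Prop) : Prop :=
  [/\ admissible I,
      (forall v, #|[set x : 'I_4 | src x == v]| <= 2)%N,
      (forall v, #|[set x : 'I_4 | tgt x == v]| <= 2)%N,
      (forall al be ga : 'I_4, al != be -> src al = src be -> src be = tgt ga ->
          I (arr ga * arr al) \/ I (arr ga * arr be)) &
      (forall al be ga : 'I_4, al != be -> tgt al = tgt be -> tgt be = src ga ->
          I (arr al * arr ga) \/ I (arr be * arr ga))].
End PathAlg.

(* The relations of u(m), oriented as the rewriting rules ba -> ab + c, ca -> ac + a,
   cb -> bc + b, cc -> c, a^4 -> 0, b^4 -> 0 (signs do not matter in characteristic 2), reduce
   every element to a combination of the 32 words a^i b^j c^l with i, j < 4 and l < 2, and every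
   rewriting step stays in the same class modulo the relations.  The map phi sends a path to the
   product of the images of its vertex or arrows and is extended linearly; that it is multiplicative
   and kills I comes down to finitely many identities in u(m), each checked by reduction to normal
   form.  Modulo I every path of length 3 vanishes, so the eight paths e_0, e_1, alpha_i, beta_i,
   alpha_1 beta_2, beta_1 alpha_2 span kQ/I.  Their images span e u(m) e, because e n e reduces to
   a combination of them for each of the 32 normal words n, and they are linearly independent, as
   the regular representation of u(m) on the normal words shows: it satisfies the defining
   relations and separates the eight images at suitable matrix entries.  Hence ker phi = I, and
   special biseriality of (Q, I) is a finite inspection of the generators of I. *)

From HB Require Import structures.
From mathcomp Require Import all_boot all_order all_algebra.
From mathcomp.multinomials Require Import monalg.
Import GRing.Theory.

Set Implicit Arguments.
Unset Strict Implicit.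
Unset Printing Implicit Defensive.

Local Open Scope ring_scope.

Section IdealGen.
Variables (R : nzRingType) (S : R -> Prop).

Lemma ideal_gen0 : ideal_gen S 0.
Proof. by exists [::]; rewrite big_nil. Qed.

Lemma ideal_gen_rel s : S s -> ideal_gen S s.
Proof.
move=> Ss; exists [:: (1, s, 1)]; rewrite big_seq1 mul1r mulr1.
by split=> // t; rewrite inE => /eqP ->.
Qed.

Lemma ideal_genD x y : ideal_gen S x -> ideal_gen S y -> ideal_gen S (x + y).
Proof.
move=> [l1 [S1 ->]] [l2 [S2 ->]]; exists (l1 ++ l2); rewrite big_cat.
by split=> // t; rewrite mem_cat => /orP[/S1|/S2].
Qed.

Lemma ideal_genMl u x : ideal_gen S x -> ideal_gen S (u * x).
Proof.
move=> [l [Sl ->]]; exists [seq (u * t.1.1, t.1.2, t.2) | t <- l].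
split; first by move=> _ /mapP[t /Sl St ->].
by rewrite big_map mulr_sumr; apply: eq_bigr => t _; rewrite !mulrA.
Qed.

Lemma ideal_genMr x v : ideal_gen S x -> ideal_gen S (x * v).
Proof.
move=> [l [Sl ->]]; exists [seq (t.1.1, t.1.2, t.2 * v) | t <- l].
split; first by move=> _ /mapP[t /Sl St ->].
by rewrite big_map mulr_suml; apply: eq_bigr => t _; rewrite !mulrA.
Qed.

Lemma ideal_genN x : ideal_gen S x -> ideal_gen S (- x).
Proof. by rewrite -mulN1r; apply: ideal_genMl. Qed.

Lemma ideal_gen_sum (I : Type) (r : seq I) (F : I -> R) :
  (forall i, ideal_gen S (F i)) -> ideal_gen S (\sum_(i <- r) F i).
Proof.
move=> SF; elim: r => [|i r IHr]; first by rewrite big_nil; apply: ideal_gen0.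
by rewrite big_cons; apply: ideal_genD.
Qed.

Lemma ideal_gen_sum_in (I : eqType) (r : seq I) (F : I -> R) :
  (forall i, i \in r -> ideal_gen S (F i)) -> ideal_gen S (\sum_(i <- r) F i).
Proof.
move=> SF; rewrite big_seq_cond big_mkcond; apply: ideal_gen_sum => i.
by case: ifP => [/andP[/SF] //|_]; apply: ideal_gen0.
Qed.

Lemma ideal_gen_kernel (T : nzRingType) (f : R -> T) :
    {morph f : x y / x + y} -> {morph f : x y / x * y} ->
    (forall s, S s -> f s = 0) -> forall x, ideal_gen S x -> f x = 0.
Proof.
move=> fD fM fS x [l [Sl ->]].
have f0 : f 0 = 0 by apply: (addrI (f 0)); rewrite -fD !addr0.
elim: l Sl => [|t l IHl] Sl; first by rewrite big_nil.
rewrite big_cons fD !fM (fS _ (Sl t (mem_head _ _))) mulr0 mul0r add0r.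
by apply: IHl => u lu; apply: Sl; rewrite inE lu orbT.
Qed.

Definition eqmod x y := ideal_gen S (x - y).

Lemma eqmod_refl x : eqmod x x.
Proof. by rewrite /eqmod subrr; apply: ideal_gen0. Qed.

Lemma eqmod_sym x y : eqmod x y -> eqmod y x.
Proof. by move=> Sxy; rewrite /eqmod -opprB; apply: ideal_genN. Qed.

Lemma eqmod_trans y x z : eqmod x y -> eqmod y z -> eqmod x z.
Proof. by move=> Sxy Syz; rewrite /eqmod -(subrKA y); apply: ideal_genD. Qed.

Lemma eqmodD x1 y1 x2 y2 : eqmod x1 y1 -> eqmod x2 y2 -> eqmod (x1 + x2) (y1 + y2).
Proof. by move=> S1 S2; rewrite /eqmod opprD addrACA; apply: ideal_genD. Qed.

Lemma eqmodM x1 y1 x2 y2 : eqmod x1 y1 -> eqmod x2 y2 -> eqmod (x1 * x2) (y1 * y2).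
Proof.
move=> S1 S2; rewrite /eqmod -(subrKA (y1 * x2)) -mulrBl -mulrBr.
by apply: ideal_genD; [apply: ideal_genMr | apply: ideal_genMl].
Qed.

Lemma eqmod_sum (I : Type) (r : seq I) (F G : I -> R) :
  (forall i, eqmod (F i) (G i)) -> eqmod (\sum_(i <- r) F i) (\sum_(i <- r) G i).
Proof. by move=> SFG; rewrite /eqmod -sumrB; apply: ideal_gen_sum. Qed.

Lemma eqmod_sum_in (I : eqType) (r : seq I) (F G : I -> R) :
  (forall i, i \in r -> eqmod (F i) (G i)) -> eqmod (\sum_(i <- r) F i) (\sum_(i <- r) G i).
Proof. by move=> SFG; rewrite /eqmod -sumrB; apply: ideal_gen_sum_in. Qed.

Lemma eqmod0 x : eqmod x 0 = ideal_gen S x.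
Proof. by rewrite /eqmod subr0. Qed.
End IdealGen.

Lemma ideal_gen_sub (R : nzRingType) (S S' : R -> Prop) x :
  (forall s, S s -> ideal_gen S' s) -> ideal_gen S x -> ideal_gen S' x.
Proof.
move=> SS' [l [Sl ->]]; apply: ideal_gen_sum_in => t /Sl /SS' S't.
by apply: ideal_genMr; apply: ideal_genMl.
Qed.

Lemma eqmodZ (K : fieldType) (A : lalgType K) (S : A -> Prop) (c : K) x y :
  eqmod S x y -> eqmod S (c *: x) (c *: y).
Proof. by rewrite /eqmod -scalerBr -mulr_algl; apply: ideal_genMl. Qed.

Section PathAlgebra.
Variables (k : fieldType) (P : algType k) (pe : qpath -> P).
Hypothesis HP : is_path_algebra pe.

Definition lincomb (V : lmodType k) (F : qpath -> V) (l : seq (k * qpath)) : V :=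
  \sum_(t <- l) t.1 *: F t.2.

Definition valid_comb (l : seq (k * qpath)) := all (fun t => valid_path t.2) l.

Lemma lincomb_cat (V : lmodType k) (F : qpath -> V) l1 l2 :
  lincomb F (l1 ++ l2) = lincomb F l1 + lincomb F l2.
Proof. by rewrite /lincomb big_cat. Qed.

Lemma lincomb_scale (V : lmodType k) (F : qpath -> V) c l :
  lincomb F [seq (c * t.1, t.2) | t <- l] = c *: lincomb F l.
Proof. by rewrite /lincomb big_map scaler_sumr; apply: eq_bigr => t _; rewrite scalerA. Qed.

Lemma lincomb_collect (V : lmodType k) (F : qpath -> V) l :
  lincomb F l = lincomb F [seq (\sum_(t <- l | t.2 == p) t.1, p) | p <- undup (map snd l)].
Proof.
rewrite /lincomb big_map; under [RHS]eq_bigr do rewrite scaler_suml.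
rewrite (exchange_big_dep predT) //=; apply: eq_big_seq => t lt.
rewrite -big_filter (eq_filter (a2 := pred1 t.2)) => [|p]; last by rewrite /= eq_sym.
by rewrite filter_pred1_uniq ?undup_uniq ?big_seq1 // mem_undup map_f.
Qed.

Lemma lincomb_eq0 (V : lmodType k) (F : qpath -> V) l :
  valid_comb l -> lincomb pe l = 0 -> lincomb F l = 0.
Proof.
case: HP => _ _ pe_free /allP lv; rewrite [lincomb F l]lincomb_collect lincomb_collect.
set l' := map _ _ => l'0; have l'_uniq : uniq (map snd l').
  by rewrite -map_comp map_id_in ?undup_uniq.
have l'v t : t \in l' -> valid_path t.2.
  by move=> /mapP[_ /[!mem_undup] /mapP[u /lv ? ->] ->].
rewrite /lincomb big_seq big1 // => t lt.
by rewrite (pe_free l' l'_uniq l'v l'0 t lt) scale0r.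
Qed.

Lemma path_coords_ex (y : P) : exists l, valid_comb l && (y == lincomb pe l).
Proof.
case: HP => _ pe_span _; have [l [lv ->]] := pe_span y.
by exists l; rewrite eqxx andbT; apply/allP.
Qed.

Definition path_coords (y : P) : seq (k * qpath) := xchoose (path_coords_ex y).

Lemma path_coordsP y : valid_comb (path_coords y) /\ y = lincomb pe (path_coords y).
Proof. by have /andP[? /eqP] := xchooseP (path_coords_ex y). Qed.

Definition path_lift (V : lmodType k) (F : qpath -> V) (y : P) : V :=
  lincomb F (path_coords y).

Section PathLift.
Variables (V : lmodType k) (F : qpath -> V).

Lemma path_liftE y l : valid_comb l -> y = lincomb pe l -> path_lift F y = lincomb F l.
Proof.
move=> lv ->; have [cv cE] := path_coordsP (lincomb pe l).
apply/eqP; rewrite -subr_eq0 -scaleN1r -lincomb_scale -lincomb_cat; apply/eqP.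
apply: lincomb_eq0; first by rewrite /valid_comb all_cat all_map; apply/andP.
by rewrite lincomb_cat lincomb_scale scaleN1r -cE subrr.
Qed.

Lemma path_lift_pe p : valid_path p -> path_lift F (pe p) = F p.
Proof.
move=> pv; rewrite (@path_liftE _ [:: (1, p)]) /lincomb ?big_seq1 ?scale1r //=.
by rewrite pv.
Qed.

Lemma path_lift_is_linear : linear (path_lift F).
Proof.
move=> c x y; have [xv xE] := path_coordsP x; have [yv yE] := path_coordsP y.
rewrite (@path_liftE _ ([seq (c * t.1, t.2) | t <- path_coords x] ++ path_coords y)).
- by rewrite lincomb_cat lincomb_scale.
- by rewrite /valid_comb all_cat all_map; apply/andP.
- by rewrite lincomb_cat lincomb_scale -xE -yE.
Qed.
End PathLift.

End PathAlgebra.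

HB.instance Definition _ (k : fieldType) (P : algType k) (pe : qpath -> P)
    (HP : is_path_algebra pe) (V : lmodType k) (F : qpath -> V) :=
  GRing.isLinear.Build k P V *:%R (path_lift HP F) (path_lift_is_linear HP F).

(** * The bound quiver (Q, I) *)

Lemma vertexP (v : 'I_2) : v = v0 \/ v = v1.
Proof. by case: v => [[|[|//]] ?]; [left|right]; apply: val_inj. Qed.

Lemma arrowP (x : 'I_4) : [\/ x = alpha1, x = alpha2, x = beta1 | x = beta2].
Proof. by case: x => [[|[|[|[|//]]]] ?]; [apply: Or41|apply: Or42|apply: Or43|apply: Or44]; apply: val_inj. Qed.

Ltac solve_I_rel := apply: ideal_gen_rel; rewrite /I_rel; do 5?[by left | right]; by [].

Section Quiver.
Variables (k : fieldType) (P : algType k) (pe : qpath -> P).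
Hypothesis HP : is_path_algebra pe.
Local Notation arr := (arr pe).
Local Notation eps := (eps pe).
Local Notation I := (I_Q pe).

Lemma pe_mul p q : valid_path p -> valid_path q ->
  pe p * pe q = if path_end p == q.1 then pe (p.1, p.2 ++ q.2) else 0.
Proof. by case: HP => pe_mul _ _; apply: pe_mul. Qed.

Lemma valid_arr x : valid_path (src x, [:: x]).
Proof. by rewrite /valid_path /= eqxx. Qed.

Lemma valid_cons v x s : valid_path (v, x :: s) -> v = src x /\ valid_path (tgt x, s).
Proof.
rewrite /valid_path /= => /andP[/eqP -> xs]; split=> //.
by case: s xs => //= y s /andP[/eqP -> ->]; rewrite eqxx.
Qed.

Lemma valid_cat p q : valid_path p -> valid_path q -> path_end p = q.1 ->
  valid_path (p.1, p.2 ++ q.2).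
Proof.
case: p q => v [|x s] [w t] pv qv; rewrite /path_end /= => ew; first by rewrite ew.
move: pv; rewrite /valid_path /= cat_path => /andP[-> ->] /=.
by case: t qv => //= y t /andP[/eqP yw ->]; rewrite ew yw eqxx.
Qed.

Lemma arr_mul x y : arr x * arr y = if tgt x == src y then pe (src x, [:: x; y]) else 0.
Proof. by rewrite pe_mul ?valid_arr. Qed.

Lemma arr_mul0 x y : tgt x != src y -> arr x * arr y = 0.
Proof. by rewrite arr_mul => /negbTE ->. Qed.

Lemma pe_cons v x s : valid_path (v, x :: s) -> pe (v, x :: s) = arr x * pe (tgt x, s).
Proof.
move=> xsv; have [-> sv] := valid_cons xsv.
by rewrite pe_mul ?valid_arr //= eqxx.
Qed.

Lemma eps_mul v p : valid_path p -> eps v * pe p = if v == p.1 then pe p else 0.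
Proof. by case: p => w s pv; rewrite pe_mul // /path_end /=; case: eqP => [->|]. Qed.

Lemma eps_sum : eps v0 + eps v1 = 1.
Proof.
have [cv c1] := path_coordsP HP 1; rewrite -[LHS]mulr1 [in LHS]c1 [RHS]c1.
rewrite /lincomb mulr_sumr !big_seq; apply: eq_bigr => t /(allP cv) tv.
by rewrite -scalerAr mulrDl !eps_mul //; case: (vertexP t.2.1) => ->; rewrite /= ?addr0 ?add0r.
Qed.

Lemma I_Q_arr3 x y z : I (arr x * arr y * arr z).
Proof.
have I_D (u v : P) : I (u + v) -> I u -> I v.
  by move=> Iuv Iu; rewrite -(addKr u v); apply: ideal_genD => //; apply: ideal_genN.
case: (arrowP x) (arrowP y) (arrowP z) => -> [] -> [] ->;
  do ?[by rewrite arr_mul0 ?mul0r //; apply: ideal_gen0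
      |by rewrite -mulrA arr_mul0 ?mulr0 //; apply: ideal_gen0
      |by apply: ideal_genMr; solve_I_rel
      |by rewrite -mulrA; apply: ideal_genMl; solve_I_rel].
- apply: (I_D (arr alpha1 * arr beta1 * arr alpha2)).
    by rewrite -!mulrA -mulrDr; apply: ideal_genMl; solve_I_rel.
  by apply: ideal_genMr; solve_I_rel.
- apply: (I_D (arr alpha1 * arr beta2 * arr alpha2)).
    by rewrite -mulrDl; apply: ideal_genMr; solve_I_rel.
  by rewrite -mulrA; apply: ideal_genMl; solve_I_rel.
- apply: (I_D (arr beta1 * arr alpha1 * arr beta2)).
    by rewrite -!mulrA -mulrDr; apply: ideal_genMl; solve_I_rel.
  by apply: ideal_genMr; solve_I_rel.
- apply: (I_D (arr beta1 * arr alpha2 * arr beta2)).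
    by rewrite -mulrDl; apply: ideal_genMr; solve_I_rel.
  by rewrite -mulrA; apply: ideal_genMl; solve_I_rel.
Qed.

Definition basis_path (i : nat) : qpath :=
  nth (v0, [::]) [:: (v0, [::]); (v1, [::]); (v0, [:: alpha1]); (v0, [:: alpha2]);
    (v1, [:: beta1]); (v1, [:: beta2]); (v0, [:: alpha1; beta2]); (v1, [:: beta1; alpha2])] i.

Definition basis_comb (D : nat -> k) : P := \sum_(i < 8) D i *: pe (basis_path i).

Lemma basis_comb_lin c D1 D2 :
  basis_comb (fun i => c * D1 i + D2 i) = c *: basis_comb D1 + basis_comb D2.
Proof.
by rewrite /basis_comb scaler_sumr -big_split; apply: eq_bigr => i _; rewrite scalerDl scalerA.
Qed.

Lemma basis_comb_unit j c : (j < 8)%N ->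
  basis_comb (fun i => if i == j then c else 0) = c *: pe (basis_path j).
Proof.
move=> lt_j8; rewrite /basis_comb (bigD1 (Ordinal lt_j8)) //= eqxx big1 ?addr0 // => i ij.
by rewrite -(inj_eq val_inj) /= in ij; rewrite (negbTE ij) scale0r.
Qed.

Lemma basis_reduce u j c : (j < 8)%N -> I (u - c *: pe (basis_path j)) ->
  exists D, I (u - basis_comb D).
Proof. by move=> lt_j8 Iu; exists (fun i => if i == j then c else 0); rewrite basis_comb_unit. Qed.

Lemma I_basis_reduce u : I u -> exists D, I (u - basis_comb D).
Proof. by move=> Iu; apply: (@basis_reduce _ 0 0) => //; rewrite scale0r subr0. Qed.

Lemma arr_reduce x : exists D, I (arr x - basis_comb D).
Proof.
have basis_arr j : (j < 8)%N -> arr x = pe (basis_path j) -> exists D, I (arr x - basis_comb D).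
  by move=> lt_j8 xj; apply: (@basis_reduce _ j 1) => //; rewrite scale1r xj subrr; apply: ideal_gen0.
by case: (arrowP x) => xE; [apply: (basis_arr 2) | apply: (basis_arr 3) | apply: (basis_arr 4)
  | apply: (basis_arr 5)]; rewrite // xE.
Qed.

Lemma arr2_reduce x y : exists D, I (arr x * arr y - basis_comb D).
Proof.
have b6 : pe (basis_path 6) = arr alpha1 * arr beta2 by rewrite arr_mul.
have b7 : pe (basis_path 7) = arr beta1 * arr alpha2 by rewrite arr_mul.
case: (arrowP x) (arrowP y) => -> [] ->; do ?[apply: I_basis_reduce;
  by [rewrite arr_mul0 //; apply: ideal_gen0 | solve_I_rel]].
- by apply: (@basis_reduce _ 6 1) => //; rewrite scale1r b6 subrr; apply: ideal_gen0.
- by apply: (@basis_reduce _ 6 (-1)) => //; rewrite scaleN1r opprK b6 addrC; solve_I_rel.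
- by apply: (@basis_reduce _ 7 1) => //; rewrite scale1r b7 subrr; apply: ideal_gen0.
- by apply: (@basis_reduce _ 7 (-1)) => //; rewrite scaleN1r opprK b7 addrC; solve_I_rel.
Qed.

Lemma path_reduce p : valid_path p -> exists D, I (pe p - basis_comb D).
Proof.
case: p => v [|x [|y [|z s]]] pv.
- by case: (vertexP v) => ->; [apply: (@basis_reduce _ 0 1) | apply: (@basis_reduce _ 1 1)];
    rewrite // scale1r subrr; apply: ideal_gen0.
- by have [-> _] := valid_cons pv; apply: arr_reduce.
- have [_ yv] := valid_cons pv; have [xy _] := valid_cons yv.
  by rewrite (pe_cons pv) xy; apply: arr2_reduce.
- have [_ yzv] := valid_cons pv; have [_ zv] := valid_cons yzv.
  rewrite (pe_cons pv) (pe_cons yzv) (pe_cons zv) !mulrA.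
  by apply: I_basis_reduce; apply: ideal_genMr; apply: I_Q_arr3.
Qed.

Lemma basis_span_mod_I y : exists D, I (y - basis_comb D).
Proof.
have [+ ->] := path_coordsP HP y; elim: (path_coords HP y) => [_|t l IHl /andP[tv lv]].
  by apply: I_basis_reduce; rewrite /lincomb big_nil; apply: ideal_gen0.
have [[D1 I1] [D2 I2]] := (path_reduce tv, IHl lv).
exists (fun i => t.1 * D1 i + D2 i); rewrite basis_comb_lin /lincomb big_cons -/(lincomb pe l).
rewrite opprD addrACA -scalerBr.
by apply: ideal_genD => //; rewrite -mulr_algl; apply: ideal_genMl.
Qed.

Lemma card_arrows_from v : (#|[set x : 'I_4 | src x == v]| <= 2)%N.
Proof.
case: (vertexP v) => ->; [rewrite (_ : [set x | _] = [set alpha1; alpha2])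
  | rewrite (_ : [set x | _] = [set beta1; beta2])]; rewrite ?cards2 //;
  by apply/setP => x; rewrite !inE; case: (arrowP x) => ->.
Qed.

Lemma card_arrows_to v : (#|[set x : 'I_4 | tgt x == v]| <= 2)%N.
Proof.
case: (vertexP v) => ->; [rewrite (_ : [set x | _] = [set beta1; beta2])
  | rewrite (_ : [set x | _] = [set alpha1; alpha2])]; rewrite ?cards2 //;
  by apply/setP => x; rewrite !inE; case: (arrowP x) => ->.
Qed.

Ltac arrow_cases al be ga :=
  case: (arrowP al) (arrowP be) (arrowP ga) => -> [] -> [] -> /eqP ? /(congr1 val) /= ?
    /(congr1 val) /= ?; first [ exfalso; congruence | by left; solve_I_rel | by right; solve_I_rel ].

Lemma biserial_out al be ga : al != be -> src al = src be -> src be = tgt ga ->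
  I (arr ga * arr al) \/ I (arr ga * arr be).
Proof. by arrow_cases al be ga. Qed.

Lemma biserial_in al be ga : al != be -> tgt al = tgt be -> tgt be = src ga ->
  I (arr al * arr ga) \/ I (arr be * arr ga).
Proof. by arrow_cases al be ga. Qed.

Lemma I_Q_admissible : admissible pe I.
Proof.
exists 3; split=> //; split=> x; apply: ideal_gen_sub => s.
  case=> l [+ ->]; case: l => [|a [|b [|c [|//]]]] // _.
  by rewrite !big_cons big_nil mulr1 mulrA; apply: I_Q_arr3.
have arr2 a b : arrow_ideal_pow pe 2 (arr a * arr b).
  by apply: ideal_gen_rel; exists [:: a; b]; rewrite !big_cons big_nil mulr1.
by case=> [|[|[|[|[|]]]]] ->; do ?apply: ideal_genD; apply: arr2.
Qed.

Lemma special_biserial_I_Q : special_biserial pe I.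
Proof.
split; [exact: I_Q_admissible | exact: card_arrows_from | exact: card_arrows_to
  | exact: biserial_out | exact: biserial_in].
Qed.

End Quiver.

(** * Normal forms in u(m) *)

(* A word in a, b, c is a sequence over 0, 1, 2 (larger letters also read as c); a wpoly is
   a sum of words over GF(2), i.e. a list of words read modulo cancelling equal pairs. *)
Definition word := seq nat.
Definition wpoly := seq word.

Definition wmul (p q : wpoly) : wpoly := [seq u ++ v | u <- p, v <- q].

Definition um_rules : seq (word * wpoly) :=
  [:: ([:: 1; 0], [:: [:: 0; 1]; [:: 2]]);
      ([:: 2; 0], [:: [:: 0; 2]; [:: 0]]);
      ([:: 2; 1], [:: [:: 1; 2]; [:: 1]]);
      ([:: 2; 2], [:: [:: 2]]);
      ([:: 0; 0; 0; 0], [::]);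
      ([:: 1; 1; 1; 1], [::])]%N.

Fixpoint rewrite_prefix (rs : seq (word * wpoly)) (w : word) : option wpoly :=
  if rs is r :: rs' then
    if take (size r.1) w == r.1 then Some [seq u ++ drop (size r.1) w | u <- r.2]
    else rewrite_prefix rs' w
  else None.

Fixpoint rewrite_word (w : word) : option wpoly :=
  if w is x :: w' then
    if rewrite_prefix um_rules w is Some q then Some q else omap (map (cons x)) (rewrite_word w')
  else None.

Lemma rewrite_word_cons x w : rewrite_word (x :: w) =
  if rewrite_prefix um_rules (x :: w) is Some q then Some q
  else omap (map (cons x)) (rewrite_word w).
Proof. by []. Qed.

Definition rewrite_step (p : wpoly) : wpoly :=
  flatten [seq odflt [:: w] (rewrite_word w) | w <- p].

Definition cancel_pairs (p : wpoly) : wpoly := [seq w <- undup p | odd (count_mem w p)].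

Fixpoint normalize (fuel : nat) (p : wpoly) : wpoly :=
  let q := cancel_pairs p in
  if fuel is n.+1 then
    if has (isSome \o rewrite_word) q then normalize n (rewrite_step q) else q
  else q.

(* Any fuel gives an element of the same class; 100 suffices for the normal forms used here. *)
Definition nf (p : wpoly) : wpoly := normalize 100 p.

Definition um_relations (R : nzRingType) (A B C : R) (x : R) : Prop :=
  x = A * B + B * A - C \/
  x = A * C + C * A - A \/
  x = B * C + C * B - B \/
  x = A ^+ 4 \/
  x = B ^+ 4 \/
  x = C ^+ 2 + C.

Section WordCalculus.
Variables (R : nzRingType) (A B C : R).
Hypothesis char2 : (2 \in [pchar R])%N.
Local Notation um_eqmod := (eqmod (um_relations A B C)).

Lemma mulrn_char2 (x : R) n : x *+ n = x *+ odd n.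
Proof. by rewrite -mulr_natl -(GRing.natr_mod_pchar char2) modn2 mulr_natl. Qed.

Definition letter (n : nat) : R := match n with 0 => A | 1 => B | _ => C end.
Definition word_val (w : word) : R := \prod_(n <- w) letter n.
Definition wpoly_val (p : wpoly) : R := \sum_(w <- p) word_val w.

Lemma word_val_cat u v : word_val (u ++ v) = word_val u * word_val v.
Proof. by rewrite /word_val big_cat. Qed.

Lemma wpoly_val_nil : wpoly_val [::] = 0.
Proof. by rewrite /wpoly_val big_nil. Qed.

Lemma wpoly_val_cat p q : wpoly_val (p ++ q) = wpoly_val p + wpoly_val q.
Proof. by rewrite /wpoly_val big_cat. Qed.

Lemma wpoly_val_wmul p q : wpoly_val (wmul p q) = wpoly_val p * wpoly_val q.
Proof.
rewrite /wpoly_val big_allpairs_dep mulr_suml; apply: eq_bigr => u _.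
by rewrite mulr_sumr; apply: eq_bigr => v _; rewrite word_val_cat.
Qed.

Lemma wpoly_val_catr p v : wpoly_val [seq u ++ v | u <- p] = wpoly_val p * word_val v.
Proof. by rewrite /wpoly_val big_map mulr_suml; apply: eq_bigr => u _; rewrite word_val_cat. Qed.

Lemma wpoly_val_cons x p : wpoly_val (map (cons x) p) = letter x * wpoly_val p.
Proof. by rewrite /wpoly_val big_map mulr_sumr; apply: eq_bigr => u _; rewrite /word_val big_cons. Qed.

Lemma um_rules_sound r : r \in um_rules -> um_eqmod (word_val r.1) (wpoly_val r.2).
Proof.
have rel x y u : um_relations A B C u -> x - y = u -> um_eqmod x y.
  by move=> Ru xyu; rewrite /eqmod xyu; apply: ideal_gen_rel.
rewrite /wpoly_val /word_val !inE => /or4P[|||/or3P[||]] /eqP -> /=;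
  rewrite ?big_cons ?big_nil ?mulr1 ?addr0.
- apply: (rel _ _ (A * B + B * A - C)); first by left.
  by rewrite !(oppr_pchar2 char2) addrA (addrC (B * A)).
- apply: (rel _ _ (A * C + C * A - A)); first by right; left.
  by rewrite !(oppr_pchar2 char2) addrA (addrC (C * A)).
- apply: (rel _ _ (B * C + C * B - B)); first by do 2 right; left.
  by rewrite !(oppr_pchar2 char2) addrA (addrC (C * B)).
- by apply: (rel _ _ (C ^+ 2 + C)); [do 5 right | rewrite (oppr_pchar2 char2) expr2].
- by apply: (rel _ _ (A ^+ 4)); [do 3 right; left | rewrite subr0 !exprS expr0 mulr1].
- by apply: (rel _ _ (B ^+ 4)); [do 4 right; left | rewrite subr0 !exprS expr0 mulr1].
Qed.

Lemma rewrite_prefix_sound rs w q : {subset rs <= um_rules} ->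
  rewrite_prefix rs w = Some q -> um_eqmod (word_val w) (wpoly_val q).
Proof.
elim: rs => [|r rs IHrs] //= rs_rules; case: ifP => [/eqP wr [<-] | _]; last first.
  by apply: IHrs => r' r'rs; apply: rs_rules; rewrite inE r'rs orbT.
rewrite -[in word_val w](cat_take_drop (size r.1) w) wr word_val_cat wpoly_val_catr.
by apply: eqmodM; [apply/um_rules_sound/rs_rules; rewrite mem_head | apply: eqmod_refl].
Qed.

Lemma rewrite_word_sound w q : rewrite_word w = Some q -> um_eqmod (word_val w) (wpoly_val q).
Proof.
elim: w q => [|x w IHw] q //; rewrite rewrite_word_cons.
case Hpre: rewrite_prefix => [q'|]; first by move=> [<-]; apply: rewrite_prefix_sound Hpre.
case Hw: rewrite_word => [q'|] //= [<-].
rewrite /word_val big_cons wpoly_val_cons.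
by apply: eqmodM; [apply: eqmod_refl | apply: IHw].
Qed.

Lemma rewrite_step_sound p : um_eqmod (wpoly_val (rewrite_step p)) (wpoly_val p).
Proof.
rewrite /rewrite_step /wpoly_val big_flatten big_map; apply: eqmod_sum => w.
case Hw: rewrite_word => [q|] /=; last by rewrite big_seq1; apply: eqmod_refl.
by apply/eqmod_sym/rewrite_word_sound.
Qed.

Lemma cancel_pairs_val p : wpoly_val (cancel_pairs p) = wpoly_val p.
Proof.
rewrite /wpoly_val /cancel_pairs -[RHS]big_undup_iterop_count big_filter big_mkcond.
apply: eq_bigr => w _; rewrite Monoid.iteropE iter_addr_0 mulrn_char2.
by case: odd.
Qed.

Lemma normalize_sound n p : um_eqmod (wpoly_val (normalize n p)) (wpoly_val p).
Proof.
elim: n p => [|n IHn] p /=; first by rewrite cancel_pairs_val; apply: eqmod_refl.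
case: ifP => _; last by rewrite cancel_pairs_val; apply: eqmod_refl.
apply: eqmod_trans (IHn _) _; rewrite -[X in um_eqmod _ X]cancel_pairs_val.
exact: rewrite_step_sound.
Qed.

Lemma nf_sound p : um_eqmod (wpoly_val (nf p)) (wpoly_val p).
Proof. exact: normalize_sound. Qed.

Lemma eqmod_nf p q : nf (p ++ q) = [::] -> um_eqmod (wpoly_val p) (wpoly_val q).
Proof.
move=> pq0; have := nf_sound (p ++ q); rewrite pq0 wpoly_val_cat.
by move/eqmod_sym; rewrite /eqmod /wpoly_val big_nil subr0 -[X in _ + X](oppr_pchar2 char2).
Qed.

End WordCalculus.

(** * The map from kQ to u(m) *)

Definition e0_w : wpoly := wmul [:: [::]; [:: 0; 1]; [:: 0; 0; 1; 1]] [:: [::]; [:: 2]]%N.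
Definition e1_w : wpoly := wmul [:: [::]; [:: 0; 0; 1; 1]] [:: [:: 2]]%N.
Definition vertex_w (v : 'I_2) : wpoly := if v == v0 then e0_w else e1_w.
Definition arrow_w (x : 'I_4) : wpoly :=
  match val x with
  | 0 => wmul [:: [:: 0; 0; 0]] e1_w
  | 1 => wmul [:: [:: 1]] e1_w
  | 2 => wmul [:: [:: 0]] e0_w
  | _ => wmul [:: [:: 1; 1; 1]] e0_w
  end%N.
Definition path_w (p : qpath) : wpoly :=
  if p.2 is [::] then vertex_w p.1 else foldr (fun x => wmul (arrow_w x)) [:: [::]] p.2.

Section PathImage.
Variables (k : fieldType) (R : algType k) (A B C : R).
Hypothesis char2 : (2 \in [pchar R])%N.
Local Notation um_eqmod := (eqmod (um_relations A B C)).
Local Notation wval := (wpoly_val A B C).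

Definition vertex_img v := wval (vertex_w v).
Definition arrow_img x := wval (arrow_w x).
Definition path_img p := wval (path_w p).

Lemma eqmod_nf_val p q x y : wval p = x -> wval q = y -> nf (p ++ q) = [::] -> um_eqmod x y.
Proof. by move=> <- <-; apply: eqmod_nf. Qed.

Lemma vertex_img_mul v w :
  um_eqmod (vertex_img v * vertex_img w) (if v == w then vertex_img v else 0).
Proof.
apply: (@eqmod_nf_val (wmul (vertex_w v) (vertex_w w)) (if v == w then vertex_w v else [::])).
- exact: wpoly_val_wmul.
- by case: ifP; rewrite ?wpoly_val_nil.
- by case: (vertexP v) (vertexP w) => -> [] ->; vm_compute.
Qed.

Lemma vertex_arrow_img v x :
  um_eqmod (vertex_img v * arrow_img x) (if v == src x then arrow_img x else 0).
Proof.
apply: (@eqmod_nf_val (wmul (vertex_w v) (arrow_w x)) (if v == src x then arrow_w x else [::])).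
- exact: wpoly_val_wmul.
- by case: ifP; rewrite ?wpoly_val_nil.
- by case: (vertexP v) (arrowP x) => -> [] ->; vm_compute.
Qed.

Lemma arrow_vertex_img x w :
  um_eqmod (arrow_img x * vertex_img w) (if tgt x == w then arrow_img x else 0).
Proof.
apply: (@eqmod_nf_val (wmul (arrow_w x) (vertex_w w)) (if tgt x == w then arrow_w x else [::])).
- exact: wpoly_val_wmul.
- by case: ifP; rewrite ?wpoly_val_nil.
- by case: (arrowP x) (vertexP w) => -> [] ->; vm_compute.
Qed.

Lemma arrow_img_mul0 x y : tgt x != src y -> um_eqmod (arrow_img x * arrow_img y) 0.
Proof.
move=> xy; apply: (@eqmod_nf_val (wmul (arrow_w x) (arrow_w y)) [::]).
- exact: wpoly_val_wmul.
- exact: wpoly_val_nil.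
- by move: xy; case: (arrowP x) (arrowP y) => -> [] ->; vm_compute.
Qed.

Lemma path_img_cons v x s : path_img (v, x :: s) = \prod_(y <- x :: s) arrow_img y.
Proof.
rewrite /path_img (_ : path_w _ = foldr (fun y => wmul (arrow_w y)) [:: [::]] (x :: s)) //.
elim: (x :: s) => [|y t IHt] /=.
  by rewrite big_nil /wpoly_val big_seq1 /word_val big_nil.
by rewrite wpoly_val_wmul IHt big_cons.
Qed.

Lemma path_img_mul p q : valid_path p -> valid_path q ->
  um_eqmod (if path_end p == q.1 then path_img (p.1, p.2 ++ q.2) else 0) (path_img p * path_img q).
Proof.
have last_prod x s : \prod_(y <- x :: s) arrow_img y =
    (\prod_(y <- belast x s) arrow_img y) * arrow_img (last x s).
  by rewrite lastI -cats1 big_cat big_seq1.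
case: p q => v [|x s] [w [|y t]] pv qv; rewrite /path_end /=.
- by apply: eqmod_sym; apply: vertex_img_mul.
- have [-> _] := valid_cons qv; rewrite !path_img_cons big_cons mulrA.
  apply: eqmod_sym; apply: eqmod_trans (eqmodM (vertex_arrow_img _ _) (eqmod_refl _ _)) _.
  by case: ifP => _; rewrite ?mul0r; apply: eqmod_refl.
- rewrite cats0 !path_img_cons last_prod -mulrA.
  apply: eqmod_sym; apply: eqmod_trans (eqmodM (eqmod_refl _ _) (arrow_vertex_img _ _)) _.
  by case: ifP => _; rewrite ?mulr0; apply: eqmod_refl.
- have [-> _] := valid_cons qv; rewrite !path_img_cons; case: ifP => [_ | /negbT xy].
    by rewrite -cat_cons big_cat; apply: eqmod_refl.
  rewrite last_prod big_cons mulrA -(mulrA _ (arrow_img (last x s))).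
  apply: eqmod_sym; apply: eqmod_trans (eqmodM (eqmodM (eqmod_refl _ _) (arrow_img_mul0 xy)) (eqmod_refl _ _)) _.
  by rewrite mulr0 mul0r; apply: eqmod_refl.
Qed.

Lemma vertex_img0 : vertex_img v0 = (1 + A * B + A ^+ 2 * B ^+ 2) * (1 + C).
Proof.
rewrite /vertex_img /= wpoly_val_wmul /wpoly_val /word_val !big_cons !big_nil /=.
by rewrite !mulr1 !addr0 !expr2 !mulrA !addrA.
Qed.

Lemma vertex_img1 : vertex_img v1 = (1 + A ^+ 2 * B ^+ 2) * C.
Proof.
rewrite /vertex_img /= wpoly_val_wmul /wpoly_val /word_val !big_cons !big_nil /=.
by rewrite !mulr1 !addr0 !expr2 !mulrA.
Qed.

Lemma arrow_imgE : [/\ arrow_img alpha1 = A ^+ 3 * vertex_img v1, arrow_img alpha2 = B * vertex_img v1,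
  arrow_img beta1 = A * vertex_img v0 & arrow_img beta2 = B ^+ 3 * vertex_img v0].
Proof.
by split; rewrite /arrow_img /vertex_img /= wpoly_val_wmul /wpoly_val /word_val !big_cons !big_nil
  /= !mulr1 !addr0 ?expr2 ?exprS ?expr0 ?mulr1 ?mulrA.
Qed.

End PathImage.

Section UmPhi.
Variables (k : fieldType) (R : algType k) (A B C : R).
Hypothesis char2 : (2 \in [pchar R])%N.
Variables (P : algType k) (pe : qpath -> P).
Hypothesis HP : is_path_algebra pe.
Local Notation um_eqmod := (eqmod (um_relations A B C)).
Local Notation path_img := (path_img A B C).
Local Notation vertex_img := (vertex_img A B C).
Local Notation arrow_img := (arrow_img A B C).
Local Notation phi := (path_lift HP path_img).

Lemma um_phi_pe p : valid_path p -> phi (pe p) = path_img p.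
Proof. exact: path_lift_pe. Qed.

Lemma um_phi_arr x : phi (arr pe x) = arrow_img x.
Proof. by rewrite um_phi_pe ?valid_arr // path_img_cons big_seq1. Qed.

Lemma um_phi_eps v : phi (eps pe v) = vertex_img v.
Proof. exact: um_phi_pe. Qed.

Lemma um_phi1 : phi 1 = vertex_img v0 + vertex_img v1.
Proof. by rewrite -(eps_sum HP) linearD /= !um_phi_pe. Qed.

Lemma um_phiZ c x : phi (c *: x) = c *: phi x.
Proof. exact: linearZ. Qed.

Lemma um_phiM x y : um_eqmod (phi (x * y)) (phi x * phi y).
Proof.
have [xv xE] := path_coordsP HP x; have [yv yE] := path_coordsP HP y.
rewrite [in phi (_ * _)]xE [in phi (_ * _)]yE /lincomb mulr_suml linear_sum.
rewrite [phi x]/path_lift [phi y]/path_lift /lincomb mulr_suml.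
apply: eqmod_sum_in => t /(allP xv) tv; rewrite mulr_sumr linear_sum mulr_sumr.
apply: eqmod_sum_in => u /(allP yv) uv /=.
rewrite -!scalerAl -!scalerAr !um_phiZ; apply: eqmodZ; apply: eqmodZ.
have := path_img_mul A B C char2 tv uv; rewrite (pe_mul HP) //.
case: ifP => [/eqP tu | _]; last by rewrite linear0.
by rewrite um_phi_pe //; apply: valid_cat.
Qed.

Lemma um_phi_sandwich x : um_eqmod (phi x) (phi 1 * phi x * phi 1).
Proof.
have := um_phiM (1 * x) 1; rewrite mulr1 [in X in um_eqmod X _]mul1r => /eqmod_trans; apply.
by apply: eqmodM; [apply: um_phiM | apply: eqmod_refl].
Qed.

Lemma um_phi_I_rel r : I_rel pe r -> um_eqmod (phi r) 0.
Proof.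
have img2 a b : um_eqmod (phi (arr pe a * arr pe b)) (arrow_img a * arrow_img b).
  by rewrite -!um_phi_arr; apply: um_phiM.
have nf0 p z : wpoly_val A B C p = z -> nf p = [::] -> um_eqmod z 0.
  by move=> pz p0; apply: (eqmod_nf_val char2 pz (wpoly_val_nil _ _ _)); rewrite cats0.
have nf0_mul a b : nf (wmul (arrow_w a) (arrow_w b)) = [::] ->
    um_eqmod (phi (arr pe a * arr pe b)) 0.
  by move=> ab0; apply: eqmod_trans (img2 a b) _; apply: nf0 ab0; apply: wpoly_val_wmul.
have nf0_sum a b c d : nf (wmul (arrow_w a) (arrow_w b) ++ wmul (arrow_w c) (arrow_w d)) = [::] ->
    um_eqmod (phi (arr pe a * arr pe b + arr pe c * arr pe d)) 0.
  move=> abcd0; rewrite linearD; apply: eqmod_trans (eqmodD (img2 a b) (img2 c d)) _.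
  by apply: nf0 abcd0; rewrite wpoly_val_cat !wpoly_val_wmul.
by case=> [|[|[|[|[|]]]]] ->; first [apply: nf0_mul | apply: nf0_sum]; vm_compute.
Qed.

Lemma um_phi_I x : I_Q pe x -> um_eqmod (phi x) 0.
Proof.
move=> [l [lI ->]]; rewrite eqmod0 linear_sum; apply: ideal_gen_sum_in => t /lI tI.
rewrite -eqmod0; apply: eqmod_trans (um_phiM _ _) _.
apply: eqmod_trans (eqmodM (um_phiM _ _) (eqmod_refl _ _)) _.
apply: eqmod_trans (eqmodM (eqmodM (eqmod_refl _ _) (um_phi_I_rel tI)) (eqmod_refl _ _)) _.
by rewrite mulr0 mul0r; apply: eqmod_refl.
Qed.

End UmPhi.

Definition normal_words : seq word :=
  [seq nseq i 0 ++ w | i <- iota 0 4, w <- [seq nseq j 1 ++ nseq l 2 | j <- iota 0 4, l <- iota 0 2]]%N.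

Lemma normal_words_closed :
  all (fun x => all (fun n => all (mem normal_words) (nf [:: x :: n])) normal_words) (iota 0 3).
Proof. by vm_compute. Qed.

Definition basis_w (j : nat) : wpoly := path_w (basis_path j).

(* Pairs of normal words (r, c): the coefficient of r in the normal form of b_j c is 1 for the
   j-th basis element b_j of kQ/I and 0 for the other seven. *)
Definition pivots : seq (word * word) :=
  [:: ([::], [::]); ([:: 2], [:: 2]); ([:: 0; 0; 0; 2], [::]); ([:: 1; 2], [::]);
      ([:: 0], [::]); ([:: 1; 1; 1], [::]); ([:: 0; 0; 0; 1; 1; 1], [::]); ([:: 0; 1; 2], [:: 2])]%N.

Definition pivot_coord (p : wpoly) (j : nat) : bool :=
  let: (r, c) := nth ([::], [::]) pivots j in r \in nf (wmul p [:: c]).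

(* Coordinates of p on the images of the basis paths, read off at the pivots; they are only
   trusted where corner_w_expansion checks them. *)
Definition basis_expansion (p : wpoly) : wpoly :=
  let q := nf p in flatten [seq if pivot_coord q j then basis_w j else [::] | j <- iota 0 8].

Definition corner_w (n : word) : wpoly := wmul (wmul (e0_w ++ e1_w) [:: n]) (e0_w ++ e1_w).

Lemma corner_w_expansion :
  all (fun n => nf (corner_w n ++ basis_expansion (corner_w n)) == [::]) normal_words.
Proof. by vm_compute. Qed.

Lemma basis_path_valid j : (j < 8)%N -> valid_path (basis_path j).
Proof. by case: j => [|[|[|[|[|[|[|[|]]]]]]]]. Qed.

Section NormalWords.
Variables (R : nzRingType) (A B C : R).
Hypothesis char2 : (2 \in [pchar R])%N.
Local Notation um_eqmod := (eqmod (um_relations A B C)).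
Local Notation wval := (wpoly_val A B C).

Lemma word_normal w : exists2 q, all (mem normal_words) q & um_eqmod (word_val A B C w) (wval q).
Proof.
elim: w => [|x w [q qN wq]].
  by exists [:: [::]]; [vm_compute | rewrite /wpoly_val big_seq1; apply: eqmod_refl].
have x3 : minn x 2 \in iota 0 3 by rewrite mem_iota add0n ltnS geq_minr.
exists (flatten [seq nf [:: minn x 2 :: n] | n <- q]).
  apply/allP => u /flattenP[_ /mapP[n nq ->]]; apply/allP.
  by move: (allP normal_words_closed _ x3) => /allP; apply; apply: (allP qN).
rewrite /word_val big_cons -/(word_val A B C w); apply: eqmod_trans (eqmodM (eqmod_refl _ _) wq) _.
rewrite /wpoly_val big_flatten big_map mulr_sumr; apply: eqmod_sum => n; apply: eqmod_sym.
apply: eqmod_trans (nf_sound A B C char2 _) _.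
by rewrite /wpoly_val big_seq1 /word_val big_cons; case: x {x3} => [|[|x]]; apply: eqmod_refl.
Qed.

End NormalWords.

Section UmPhiImage.
Variables (k : fieldType) (R : algType k) (A B C : R).
Hypothesis char2 : (2 \in [pchar R])%N.
Variables (P : algType k) (pe : qpath -> P).
Hypothesis HP : is_path_algebra pe.
Local Notation um_eqmod := (eqmod (um_relations A B C)).
Local Notation wval := (wpoly_val A B C).
Local Notation phi := (path_lift HP (path_img A B C)).

Definition um_phi_reachable (z : R) := exists x, um_eqmod (phi x) z.

Lemma reachable_eqmod z z' : um_phi_reachable z -> um_eqmod z z' -> um_phi_reachable z'.
Proof. by move=> [x xz] zz'; exists x; apply: eqmod_trans xz zz'. Qed.

Lemma reachableZ c z : um_phi_reachable z -> um_phi_reachable (c *: z).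
Proof. by move=> [x xz]; exists (c *: x); rewrite um_phiZ; apply: eqmodZ. Qed.

Lemma reachable_sum (I : eqType) (r : seq I) (F : I -> R) :
  (forall i, i \in r -> um_phi_reachable (F i)) -> um_phi_reachable (\sum_(i <- r) F i).
Proof.
elim: r => [|i r IHr] Fr; first by exists 0; rewrite linear0 big_nil; apply: eqmod_refl.
have [x xi] := Fr i (mem_head _ _).
have [y yr] : um_phi_reachable (\sum_(j <- r) F j).
  by apply: IHr => j jr; apply: Fr; rewrite inE jr orbT.
by exists (x + y); rewrite linearD big_cons; apply: eqmodD.
Qed.

Lemma reachable_corner n : n \in normal_words ->
  um_phi_reachable (phi 1 * word_val A B C n * phi 1).
Proof.
move=> nN; have := eqmod_nf A B C char2 (eqP (allP corner_w_expansion n nN)).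
have -> : wval (corner_w n) = phi 1 * word_val A B C n * phi 1.
  by rewrite !wpoly_val_wmul wpoly_val_cat (um_phi1 A B C HP) /wpoly_val big_seq1.
move=> /eqmod_sym; apply: reachable_eqmod; rewrite /basis_expansion /wpoly_val big_flatten big_map.
apply: reachable_sum => j; rewrite mem_iota add0n => j8; case: ifP => _; last first.
  by exists 0; rewrite linear0 big_nil; apply: eqmod_refl.
by exists (pe (basis_path j)); rewrite um_phi_pe ?basis_path_valid //; apply: eqmod_refl.
Qed.

Lemma um_phi_onto :
  (forall y : R, exists l : seq (k * word), y = \sum_(t <- l) t.1 *: word_val A B C t.2) ->
  forall y, exists x, um_eqmod (phi x) (phi 1 * y * phi 1).
Proof.
move=> span y; have [l ->] := span y; move: (phi 1) (@reachable_corner) => e corner.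
rewrite mulr_sumr mulr_suml.
apply: reachable_sum => t _; rewrite -scalerAr -scalerAl; apply: reachableZ.
have [q qN tq] := word_normal A B C char2 t.2.
apply: reachable_eqmod (eqmodM (eqmodM (eqmod_refl _ _) (eqmod_sym tq)) (eqmod_refl _ _)).
rewrite /wpoly_val mulr_sumr mulr_suml; apply: reachable_sum => n nq.
by apply: corner; apply: (allP qN).
Qed.

Lemma um_phi_ker :
  (forall D : nat -> k, um_eqmod (\sum_(i < 8) D i *: path_img A B C (basis_path i)) 0 ->
     forall i, (i < 8)%N -> D i = 0) ->
  forall x, um_eqmod (phi x) 0 -> I_Q pe x.
Proof.
move=> sep x x0; have [D ID] := basis_span_mod_I HP x.
have : um_eqmod (phi (basis_comb pe D)) 0.
  apply: eqmod_trans x0; apply: eqmod_sym.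
  by rewrite /eqmod -eqmod0 -linearB; apply: um_phi_I ID.
rewrite /basis_comb linear_sum (eq_bigr (fun i : 'I_8 => D i *: path_img A B C (basis_path i))).
  by move=> /sep D0; rewrite /basis_comb big1 ?subr0 // in ID => i _; rewrite D0 ?scale0r.
by move=> i _; rewrite linearZ /= um_phi_pe ?basis_path_valid.
Qed.

End UmPhiImage.

(** * The regular representation of u(m) *)

Definition bmx := seq (seq bool).
Definition bmx_get (M : bmx) (i j : nat) : bool := nth false (nth [::] M i) j.
Definition bmx_of (f : nat -> nat -> bool) : bmx := mkseq (fun i => mkseq (f i) 32) 32.
Definition bdot (u v : seq bool) : bool := foldr xorb false [seq x.1 && x.2 | x <- zip u v].
Definition bmx_mul (M N : bmx) : bmx :=
  let cols := mkseq (fun j => [seq nth false r j | r <- N]) 32 in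
  [seq [seq bdot r c | c <- cols] | r <- M].
Definition bmx_add (M N : bmx) : bmx := bmx_of (fun i j => xorb (bmx_get M i j) (bmx_get N i j)).
Definition bmx1 : bmx := bmx_of (fun i j => i == j).
Definition bmx0 : bmx := bmx_of (fun _ _ => false).

(* Left multiplication by a letter on the basis of normal words of u(m). *)
Definition regular_bmx (x : nat) : bmx :=
  let cols := [seq nf [:: minn x 2 :: n] | n <- normal_words] in
  bmx_of (fun i j => nth [::] normal_words i \in nth [::] cols j).

Definition word_bmx (w : word) : bmx := foldr (fun x => bmx_mul (regular_bmx x)) bmx1 w.
Definition wpoly_bmx (p : wpoly) : bmx := foldr (fun w => bmx_add (word_bmx w)) bmx0 p.

Definition um_relation_wpolys : seq wpoly :=
  [:: [:: [:: 0; 1]; [:: 1; 0]; [:: 2]]; [:: [:: 0; 2]; [:: 2; 0]; [:: 0]];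
      [:: [:: 1; 2]; [:: 2; 1]; [:: 1]]; [:: [:: 0; 0; 0; 0]]; [:: [:: 1; 1; 1; 1]];
      [:: [:: 2; 2]; [:: 2]]]%N.

Lemma regular_bmx_relations : all (fun p => wpoly_bmx p == bmx0) um_relation_wpolys.
Proof. by vm_compute. Qed.

Definition pivot_row (j : nat) : nat := index (nth ([::], [::]) pivots j).1 normal_words.
Definition pivot_col (j : nat) : nat := index (nth ([::], [::]) pivots j).2 normal_words.

Lemma pivots_in_range : all (fun j => (pivot_row j < 32) && (pivot_col j < 32))%N (iota 0 8).
Proof. by vm_compute. Qed.

Lemma regular_bmx_pivots : all (fun i => let M := wpoly_bmx (basis_w i) in
  all (fun j => bmx_get M (pivot_row j) (pivot_col j) == (i == j)) (iota 0 8)) (iota 0 8).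
Proof. by vm_compute. Qed.

Section BoolMatrix.
Variable k : fieldType.
Hypothesis char2 : (2 \in [pchar k])%N.

Definition bmx_mx (M : bmx) : 'M[k]_32 := \matrix_(i, j) (bmx_get M i j)%:R.

Lemma bmx_get_of f i j : (i < 32)%N -> (j < 32)%N -> bmx_get (bmx_of f) i j = f i j.
Proof. by move=> i32 j32; rewrite /bmx_get !nth_mkseq. Qed.

Lemma natr_xorb (a b : bool) : (xorb a b)%:R = a%:R + b%:R :> k.
Proof. by case: a b => [] []; rewrite /= ?addr0 ?add0r // (addrr_pchar2 char2). Qed.

Lemma natr_bdot u v :
  (bdot u v)%:R = \sum_(l < size v) (nth false u l)%:R * (nth false v l)%:R :> k.
Proof.
elim: v u => [|y v IHv] [|x u]; rewrite ?big_ord0 //=.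
  by rewrite big1 // => l _; rewrite nth_nil mul0r.
rewrite big_ord_recl /bdot /= natr_xorb -/(bdot u v) IHv.
by congr (_ + _); case: x y => [] []; rewrite ?mul1r ?mul0r.
Qed.

Lemma bmx_mxD M N : bmx_mx (bmx_add M N) = bmx_mx M + bmx_mx N.
Proof. by apply/matrixP => i j; rewrite !mxE bmx_get_of // natr_xorb. Qed.

Lemma bmx_mxM M N : size M = 32 -> size N = 32 -> bmx_mx (bmx_mul M N) = bmx_mx M *m bmx_mx N.
Proof.
move=> M32 N32; apply/matrixP => i j; rewrite !mxE /bmx_get /bmx_mul.
rewrite (nth_map [::]) ?M32 // (nth_map [::]) ?size_mkseq // nth_mkseq // natr_bdot size_map N32.
by apply: eq_bigr => l _; rewrite !mxE (nth_map [::]) ?N32.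
Qed.

Lemma bmx_mx1 : bmx_mx bmx1 = 1.
Proof. by apply/matrixP => i j; rewrite !mxE bmx_get_of. Qed.

Lemma bmx_mx0 : bmx_mx bmx0 = 0.
Proof. by apply/matrixP => i j; rewrite !mxE bmx_get_of. Qed.

End BoolMatrix.

Section Separation.
Variables (k : fieldType) (R : algType k) (A B C : R).
Hypothesis char2 : (2 \in [pchar k])%N.
Variable r : R -> 'M[k]_32.
Hypotheses (rD : {morph r : x y / x + y}) (rM : {morph r : x y / x * y}) (r1 : r 1 = 1).
Hypothesis rZ : forall c x, r (c *: x) = c%:M *m r x.
Hypotheses (rA : r A = bmx_mx k (regular_bmx 0)) (rB : r B = bmx_mx k (regular_bmx 1))
  (rC : r C = bmx_mx k (regular_bmx 2)).
Local Notation um_eqmod := (eqmod (um_relations A B C)).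
Local Notation wval := (wpoly_val A B C).

Lemma algebra_char2 : (2 \in [pchar R])%N.
Proof. exact: (rmorph_pchar (in_alg R)). Qed.

Lemma size_word_bmx w : size (word_bmx w) = 32.
Proof. by case: w => //=. Qed.

Lemma rep_word w : r (word_val A B C w) = bmx_mx k (word_bmx w).
Proof.
elim: w => [|x w IHw]; first by rewrite /word_val big_nil r1 bmx_mx1.
rewrite /word_val big_cons rM -/(word_val A B C w) IHw.
rewrite (_ : word_bmx (x :: w) = bmx_mul (regular_bmx x) (word_bmx w)) // bmx_mxM ?size_word_bmx //.
by congr (_ *m _); case: x => [|[|x]].
Qed.

Lemma rep_wpoly p : r (wval p) = bmx_mx k (wpoly_bmx p).
Proof.
have r0 : r 0 = 0 by apply: (addrI (r 0)); rewrite -rD !addr0.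
elim: p => [|w p IHp]; first by rewrite /wpoly_val big_nil r0 bmx_mx0.
rewrite /wpoly_val big_cons rD -/(wval p) IHp rep_word.
by rewrite (_ : wpoly_bmx (w :: p) = bmx_add (word_bmx w) (wpoly_bmx p)) // bmx_mxD.
Qed.

Lemma um_relations_wpoly s : um_relations A B C s -> exists2 p, p \in um_relation_wpolys & s = wval p.
Proof.
have opp := oppr_pchar2 algebra_char2.
case=> [|[|[|[|[|]]]]] ->; [exists (nth [::] um_relation_wpolys 0) | exists (nth [::] um_relation_wpolys 1)
  | exists (nth [::] um_relation_wpolys 2) | exists (nth [::] um_relation_wpolys 3)
  | exists (nth [::] um_relation_wpolys 4) | exists (nth [::] um_relation_wpolys 5)];
  rewrite ?mem_nth // /wpoly_val /word_val /= !big_cons !big_nil ?mulr1 ?addr0 ?opp ?addrA //.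
Qed.

Lemma rep_um_ideal x : ideal_gen (um_relations A B C) x -> r x = 0.
Proof.
apply: (@ideal_gen_kernel _ _ _ r rD rM) => s /um_relations_wpoly [p p_rel ->].
by rewrite rep_wpoly (eqP (allP regular_bmx_relations p p_rel)) bmx_mx0.
Qed.

Lemma basis_img_free (D : nat -> k) : um_eqmod (\sum_(i < 8) D i *: path_img A B C (basis_path i)) 0 ->
  forall j, (j < 8)%N -> D j = 0.
Proof.
have r0 : r 0 = 0 by apply: (addrI (r 0)); rewrite -rD !addr0.
rewrite eqmod0 => /rep_um_ideal; rewrite (big_morph r rD r0) => rD0 j j8.
have /andP[rj cj] : (pivot_row j < 32)%N && (pivot_col j < 32)%N.
  by apply: (allP pivots_in_range); rewrite mem_iota.
have entry i : (i < 8)%N ->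
    r (D i *: path_img A B C (basis_path i)) (Ordinal rj) (Ordinal cj) = D i * (i == j)%:R.
  move=> i8; have piv_i : all (fun j => bmx_get (wpoly_bmx (basis_w i)) (pivot_row j) (pivot_col j)
      == (i == j)) (iota 0 8) by apply: (allP regular_bmx_pivots); rewrite mem_iota.
  have /eqP ij := allP piv_i j (etrans (mem_iota 0 8 j) j8).
  by rewrite rZ mul_scalar_mx mxE /path_img rep_wpoly mxE ij.
have := congr1 (fun M : 'M[k]_32 => M (Ordinal rj) (Ordinal cj)) rD0.
rewrite summxE mxE (bigD1 (Ordinal j8)) //= big1 ?addr0 => [|i ij].
  by move=> rj0; have := entry j j8; rewrite eqxx mulr1 => <-; apply: rj0.
rewrite -(inj_eq val_inj) /= in ij.
by have := entry i (ltn_ord i); rewrite (negbTE ij) mulr0.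
Qed.

End Separation.

Lemma freealg_scalerAr (k : fieldType) (c : k) (x y : freealg k) : c *: (x * y) = x * (c *: y).
Proof.
have xc : x * c%:MP = c *: x.
  rewrite malgM_def fgmulgU malgZ_def /fgscale; apply: eq_bigr => m _.
  by rewrite mulrC mulm1.
by rewrite -[c *: y]mul_malgC mulrA xc -scalerAl.
Qed.

HB.instance Definition _ (k : fieldType) := GRing.Lalgebra.on (freealg k).
HB.instance Definition _ (k : fieldType) :=
  GRing.Lalgebra_isAlgebra.Build k (freealg k) (@freealg_scalerAr k).

Section FreeAlgebra.
Variable k : fieldType.
Hypothesis char2 : (2 \in [pchar k])%N.
Local Notation F := (freealg k).
Local Notation word_val := (word_val (ga k) (gb k) (gc k)).

Lemma um_eqE (x y : F) : um_eq x y = eqmod (um_relations (ga k) (gb k) (gc k)) x y.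
Proof. by []. Qed.

Lemma letter_gen (i : 'I_3) : letter (ga k) (gb k) (gc k) i = gen k i.
Proof. by case: i => [[|[|[|//]]] ?]; rewrite /ga /gb /gc /=; congr gen; apply: val_inj. Qed.

Lemma freealg_monom (s : seq 'I_3) : << FMonom s >> = \prod_(i <- s) gen k i :> F.
Proof.
elim: s => [|i s IHs]; first by rewrite big_nil -fmoneE.
rewrite big_cons -IHs malgM_def fgmulUU mulr1; congr << _ >>.
by apply: val_inj; rewrite /= fmM fmU.
Qed.

Lemma freealg_span (y : F) : exists l : seq (k * word), y = \sum_(t <- l) t.1 *: word_val t.2.
Proof.
exists [seq (y@_m, map val (fmonom_val m)) | m <- finmap.enum_fset (msupp y)].
rewrite big_map {1}[y]monalgE; apply: eq_bigr => m _ /=.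
rewrite /word_val big_map (eq_bigr _ (fun i _ => letter_gen i)) -freealg_monom fmK.
by apply/malgP => m'; rewrite mcoeffZ !mcoeffU mulrnAr mulr1.
Qed.

Definition regular_monom (m : {fmonom 'I_3}) : 'M[k]_32 := \prod_(i <- m) bmx_mx k (regular_bmx i).

Lemma regular_monom_is_mmorphism : mmorphism regular_monom.
Proof. by split=> [m m'|]; rewrite /regular_monom ?fmM ?fm1 ?big_cat ?big_nil. Qed.

HB.instance Definition _ :=
  isMultiplicative.Build {fmonom 'I_3} 'M[k]_32 regular_monom regular_monom_is_mmorphism.

Definition regular_rep (x : F) : 'M[k]_32 := mmap (@scalar_mx k 32) regular_monom x.

Lemma regular_repM : {morph regular_rep : x y / x * y}.
Proof.
apply: (commr_mmap_is_multiplicative _).1 => g m m'.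
by rewrite /GRing.comm -!mulmxE scalar_mxC.
Qed.

Lemma regular_rep_gen i : regular_rep (gen k i) = bmx_mx k (regular_bmx i).
Proof. by rewrite /regular_rep /gen mmapU /regular_monom fmU big_seq1 mul1r. Qed.

Lemma freealg_basis_img_free (D : nat -> k) :
  eqmod (um_relations (ga k) (gb k) (gc k))
    (\sum_(i < 8) D i *: path_img (ga k) (gb k) (gc k) (basis_path i)) 0 ->
  forall j, (j < 8)%N -> D j = 0.
Proof.
apply: (basis_img_free char2 (r := regular_rep)).
- exact: mmapD.
- exact: regular_repM.
- exact: mmap1.
- by move=> c x; apply: mmapZ.
- exact: regular_rep_gen.
- exact: regular_rep_gen.
- exact: regular_rep_gen.
Qed.

End FreeAlgebra.

Theorem theorem3p16 (k : closedFieldType) (char2 : (2 \in [pchar k])%N)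
    (P : algType k) (pe : qpath -> P) (HP : is_path_algebra pe) :
  (exists phi : P -> freealg k,
     (* phi is an algebra map kQ -> u(m)^b = e u(m) e (unit e) *)
     (forall x y, um_eq (phi (x + y)) (phi x + phi y)) /\
     (forall (c : k) x, um_eq (phi (c *: x)) (c *: phi x)) /\
     (forall x y, um_eq (phi (x * y)) (phi x * phi y)) /\
     um_eq (phi 1) (ue k) /\
     (forall x, um_eq (phi x) (ue k * phi x * ue k)) /\
     (* prescribed values on generators *)
     um_eq (phi (eps pe v0)) (ue0 k) /\
     um_eq (phi (eps pe v1)) (ue1 k) /\
     um_eq (phi (arr pe alpha1)) (ga k ^+ 3 * ue1 k) /\
     um_eq (phi (arr pe alpha2)) (gb k * ue1 k) /\
     um_eq (phi (arr pe beta1)) (ga k * ue0 k) /\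
     um_eq (phi (arr pe beta2)) (gb k ^+ 3 * ue0 k) /\
     (* surjective onto e u(m) e *)
     (forall y, exists x, um_eq (phi x) (ue k * y * ue k)) /\
     (* kernel = I *)
     (forall x, um_eq (phi x) 0 <-> I_Q pe x))
  /\ special_biserial pe (I_Q pe).
Proof.
have char2F : (2 \in [pchar (freealg k)])%N by apply: (rmorph_pchar (in_alg _)).
pose phi := path_lift HP (path_img (ga k) (gb k) (gc k)).
have phi1 : phi 1 = ue k by rewrite /phi um_phi1 vertex_img0 vertex_img1.
have [a1 a2 b1 b2] := arrow_imgE (ga k) (gb k) (gc k).
split; last exact: special_biserial_I_Q.
exists phi; rewrite {}/phi in phi1 *; do !split.
- by move=> x y; rewrite linearD; apply: eqmod_refl.
- by move=> c x; rewrite linearZ; apply: eqmod_refl.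
- by move=> x y; rewrite um_eqE; apply: um_phiM.
- by rewrite phi1; apply: eqmod_refl.
- by move=> x; rewrite -phi1 um_eqE; apply: um_phi_sandwich.
- by rewrite um_phi_eps vertex_img0; apply: eqmod_refl.
- by rewrite um_phi_eps vertex_img1; apply: eqmod_refl.
- by rewrite um_phi_arr a1 vertex_img1; apply: eqmod_refl.
- by rewrite um_phi_arr a2 vertex_img1; apply: eqmod_refl.
- by rewrite um_phi_arr b1 vertex_img0; apply: eqmod_refl.
- by rewrite um_phi_arr b2 vertex_img0; apply: eqmod_refl.
- move=> y; have [x xy] := um_phi_onto char2F HP (@freealg_span k) y.
  by exists x; rewrite um_eqE -phi1.
- by rewrite um_eqE; apply: (um_phi_ker char2F); apply: freealg_basis_img_free.
- by rewrite um_eqE; apply: um_phi_I.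
Qed.
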